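(* If $(E,\mathcal L)$ is an exact local representation over an infinite set $B$, then $|E|\ge 2^{2^{|B|}}$.
   Context: A local representation over a set $B$ is a pair $(E,\mathcal L)$ with $\mathcal L$ an ultrafilter on the cylinder Boolean algebra of $B^E$ (sets $\{\psi\in B^E:(\psi_{e_1},\dots,\psi_{e_n})\in R\}$, $e_i\in E$, $R\subseteq B^n$). Separated: $\{\psi:\psi_{e_1}=\psi_{e_2}\}\in\mathcal L$ only if $e_1=e_2$. For $\eta:I\to E$, the pullback of $\mathcal L$ by $\eta$ is the ultrafilter of cylinders $C\subseteq B^I$ with $\{\psi:(\psi_{\eta(i)})_{i\in I}\in C\}\in\mathcal L$; projection to $B^I$ of an ultrafilter on the cylinders of $B^{I\cup\{i_0\}}$ ($i_0\notin I$) consists of the cylinders of $B^I$ whose preimage under restriction lies in it. $(E,\mathcal L)$ is exact if it is separated and for every finite $I$, $i_0\notin I$, $\eta:I\to E$, and ultrafilter $\mathcal U$ on $\mathcal P(B^{I\cup\{i_0\}})$ projecting to the pullback of $\mathcal L$ by $\eta$, there is $e\in E$ with the pullback of $\mathcal L$ by $\eta\cup\{i_0\mapsto e\}$ equal to $\mathcal U$ (in particular, with $I=\emptyset$: every ultrafilter $\mathcal U$ on $B$ equals $\{S\subseteq B:\{\psi:\psi_e\in S\}\in\mathcal L\}$ for some $e\in E$). *)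

From Stdlib Require Import List.
Import ListNotations.

Definition finite_type (X : Type) : Prop := exists l : list X, forall x, In x l.

Definition cylinder {B X : Type} (C : (X -> B) -> Prop) : Prop :=
  exists (xs : list X) (R : list B -> Prop),
    forall psi, C psi <-> R (map psi xs).

Record cyl_ultrafilter {B X : Type} (L : ((X -> B) -> Prop) -> Prop) : Prop := {
  cuf_cyl : forall C, L C -> cylinder C;
  cuf_full : L (fun _ => True);
  cuf_nonempty : ~ L (fun _ => False);
  cuf_up : forall C D, L C -> cylinder D -> (forall psi, C psi -> D psi) -> L D;
  cuf_inter : forall C D, L C -> L D -> L (fun psi => C psi /\ D psi);
  cuf_ultra : forall C, cylinder C -> L C \/ L (fun psi => ~ C psi)
}.

Record ultrafilter {Y : Type} (U : (Y -> Prop) -> Prop) : Prop := {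
  uf_full : U (fun _ => True);
  uf_nonempty : ~ U (fun _ => False);
  uf_up : forall C D, U C -> (forall y, C y -> D y) -> U D;
  uf_inter : forall C D, U C -> U D -> U (fun y => C y /\ D y);
  uf_ultra : forall C, U C \/ U (fun y => ~ C y)
}.

Definition local_representation {B E : Type} (L : ((E -> B) -> Prop) -> Prop) : Prop :=
  cyl_ultrafilter L.

Definition separated {B E : Type} (L : ((E -> B) -> Prop) -> Prop) : Prop :=
  forall e1 e2 : E, L (fun psi => psi e1 = psi e2) -> e1 = e2.

Definition pullback {B E I : Type} (L : ((E -> B) -> Prop) -> Prop) (eta : I -> E)
  : ((I -> B) -> Prop) -> Prop :=
  fun C => cylinder C /\ L (fun psi => C (fun i => psi (eta i))).

(* Projection to B^I of an ultrafilter on B^(I ∪ {i0}); I ∪ {i0} is modelled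
   as option I, with None playing the role of the new index i0 ∉ I. *)
Definition projection {B I : Type} (U : ((option I -> B) -> Prop) -> Prop)
  : ((I -> B) -> Prop) -> Prop :=
  fun C => cylinder C /\ U (fun phi => C (fun i => phi (Some i))).

Definition extend {I E : Type} (eta : I -> E) (e : E) : option I -> E :=
  fun o => match o with Some i => eta i | None => e end.

Definition same_filter {Y : Type} (F G : (Y -> Prop) -> Prop) : Prop :=
  forall C, F C <-> G C.

Definition exact {B E : Type} (L : ((E -> B) -> Prop) -> Prop) : Prop :=
  separated L /\
  forall (I : Type), finite_type I ->
  forall (eta : I -> E) (U : ((option I -> B) -> Prop) -> Prop),
    ultrafilter U ->
    same_filter (projection U) (pullback L eta) ->
    exists e : E, same_filter (pullback L (extend eta e)) U.

(** Taking [I = ∅] in the definition of exactness, every ultrafilter on [B] is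
    realized as [S ↦ L {ψ | ψ e ∈ S}] by some [e ∈ E]; distinct ultrafilters are
    realized by distinct points.  So it suffices to exhibit [2^(2^|B|)]
    ultrafilters on [B].  By Hausdorff's theorem an infinite [B] carries an
    independent family [(Y A)] indexed by the subsets [A] of [B], and each
    [X ⊆ P(B)] yields an ultrafilter containing [Y A] for [A ∈ X] and the
    complement of [Y A] for [A ∉ X].  The independent family is built on pairs
    (finite list [l], finite list of sublists of [l]), coded into [B] via an
    injection [list B → B]; that injection comes from [|B × B| = |B|], proved by
    Zorn's lemma on partial injections [A × A → A]. *)
From Stdlib Require Import List Cantor Arith.
From mathcomp Require Import ssreflect ssrfun ssrbool boolp classical_sets filter.
From mathcomp Require seq.
Import ListNotations.
Local Open Scope classical_set_scope.

Lemma zorn_above {T} {P : set (set T)} {X0 : set T} :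
  P X0 -> (forall F, F `<=` P -> total_on F subset -> P (\bigcup_(X in F) X)) ->
  exists M, [/\ X0 `<=` M, P M & forall N, M `<=` N -> P N -> N `<=` M].
Proof.
move=> PX0 Pchain.
(* Shifting by [X0] also handles the empty chain. *)
have [|A [PA Amax]] := Zorn_bigcup (P := fun S => P (S `|` X0)).
  move=> F FP Ftot.
  have -> : \bigcup_(S in F) S `|` X0 =
      \bigcup_(S in [set S `|` X0 | S in F] `|` [set X0]) S.
    apply/seteqP; split=> t.
      move=> [[S FS St]|X0t]; last by exists X0 => //; right.
      exists (S `|` X0); last by left.
      by left; exists S.
    move=> [_ [[S FS <-]| ->]]; last by right.
    case=> [St|]; [by left; exists S|by right].
  apply: Pchain; first by move=> _ [[S FS <-]| ->] //; apply: FP.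
  move=> _ _ [[S FS <-]| ->] [[S' FS' <-]| ->].
  - case: (Ftot S S' FS FS') => SS'; [left|right] => t [/SS'|]; by [left|right].
  - by right=> t; right.
  - by left=> t; right.
  - by left.
exists (A `|` X0); split => [t|//|N AN PN t Nt]; first by right.
apply: contrapT => ANt; apply: (Amax N).
  by split=> [x Ax|NA]; [apply: AN; left|apply: ANt; left; apply: NA].
rewrite (_ : N `|` X0 = N) //; apply/seteqP; split=> [x [//|X0x]|x Nx]; last by left.
by apply: AN; right.
Qed.

Lemma infinite_nat_embedding {B : Type} : ~ finite_type B -> exists c : nat -> B, injective c.
Proof.
move=> Binf.
have /choice [fresh freshP] (l : list B) : exists x, ~ In x l.
  apply: contrapT => nofresh; apply: Binf; exists l => x.
  by apply: contrapT => xNl; apply: nofresh; exists x.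
pose fix prefix n := if n is S n' then fresh (prefix n') :: prefix n' else [].
have prefix_in m n : m < n -> In (fresh (prefix m)) (prefix n).
  elim: n => [|n IH] /= ltmn; first by inversion ltmn.
  by case: (Nat.lt_succ_r m n) => /(_ ltmn) /Nat.lt_eq_cases [/IH| ->]; [right|left].
exists (fun n => fresh (prefix n)) => m n Emn.
case: (Nat.lt_total m n) => [ltmn|[//|ltnm]].
- by case: (freshP (prefix n)); rewrite -Emn; apply: prefix_in.
- by case: (freshP (prefix m)); rewrite Emn; apply: prefix_in.
Qed.

Definition injects_into {T U} (A : set T) (B : set U) (f : T -> U) : Prop :=
  (forall x, A x -> B (f x)) /\ (forall x y, A x -> A y -> f x = f y -> x = y).

Lemma injects_into_of_rel {T} {A B : set T} (R : T -> T -> Prop) :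
  (forall x, A x -> exists2 y, B y & R x y) ->
  (forall x x' y, R x y -> R x' y -> x = x') ->
  exists f, injects_into A B f.
Proof.
move=> Rtotal Rinj.
have /choice [f fP] (x : T) : exists y, A x -> B y /\ R x y.
  have [/Rtotal [y By Rxy]|NAx] := pselect (A x); first by exists y.
  by exists x.
exists f; split=> [x /fP [] //|x y /fP [_ Rx] /fP [_ Ry] Efxy].
by apply: (Rinj _ _ (f x)); rewrite // Efxy.
Qed.

Section Comparability.
Context {T : Type} (P Q : set T).

Definition matching (S : set (T * T)) : Prop :=
  [/\ S `<=` P `*` Q, forall x y y', S (x, y) -> S (x, y') -> y = y'
    & forall x x' y, S (x, y) -> S (x', y) -> x = x'].

Lemma matching_bigcup F : F `<=` matching -> total_on F subset ->
  matching (\bigcup_(S in F) S).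
Proof.
move=> Fmatch Ftot; split=> [_ [S /Fmatch [SPQ _ _] /SPQ] //|x y y'|x x' y].
- move=> [S FS Sxy] [S' FS' Sxy']; have [SS'|S'S] := Ftot S S' FS FS'.
  + by have [_ Sfun _] := Fmatch S' FS'; apply: Sfun (SS' _ Sxy) Sxy'.
  + by have [_ Sfun _] := Fmatch S FS; apply: Sfun Sxy (S'S _ Sxy').
- move=> [S FS Sxy] [S' FS' Sx'y]; have [SS'|S'S] := Ftot S S' FS FS'.
  + by have [_ _ Sinj] := Fmatch S' FS'; apply: Sinj (SS' _ Sxy) Sx'y.
  + by have [_ _ Sinj] := Fmatch S FS; apply: Sinj Sxy (S'S _ Sx'y).
Qed.

Lemma matching_add S x0 y0 : matching S -> P x0 -> Q y0 ->
  (forall y, ~ S (x0, y)) -> (forall x, ~ S (x, y0)) -> matching (S `|` [set (x0, y0)]).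
Proof.
move=> [SPQ Sfun Sinj] Px0 Qy0 x0free y0free.
split=> [_ [/SPQ //| ->] //|x y y'|x x' y].
- move=> [Sxy|/pair_equal_spec[-> ->]] [Sxy'|/pair_equal_spec[Ex ->]] //.
  + exact: Sfun Sxy Sxy'.
  + by case: (x0free y); rewrite -Ex.
  + by case: (x0free y' Sxy').
- move=> [Sxy|/pair_equal_spec[-> ->]] [Sx'y|/pair_equal_spec[-> Ey]] //.
  + exact: Sinj Sxy Sx'y.
  + by case: (y0free x); rewrite -Ey.
  + by case: (y0free x' Sx'y).
Qed.

Lemma injects_into_total : (exists f, injects_into P Q f) \/ (exists g, injects_into Q P g).
Proof.
have match0 : matching set0 by split=> // x y y'.
have [M [_ Mmatch Mmax]] := zorn_above match0 matching_bigcup.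
have [MPQ Mfun Minj] := Mmatch.
have [Mtotal|] := pselect (forall x, P x -> exists2 y, Q y & M (x, y)).
  by left; apply: (injects_into_of_rel (fun x y => M (x, y))) Mtotal Minj.
move=> /existsNP [x0 /not_implyP [Px0 x0free]].
have Msurj y : Q y -> exists2 x, P x & M (x, y).
  move=> Qy; apply: contrapT => y0free.
  have Mx0y : M (x0, y).
    apply: (Mmax (M `|` [set (x0, y)])); [by move=> q; left| |by right].
    apply: matching_add => // [y' Mx0y'|x Mxy]; last first.
      by apply: y0free; exists x => //; case: (MPQ _ Mxy).
    by apply: x0free; exists y' => //; case: (MPQ _ Mx0y').
  by apply: x0free; exists y.
right; apply: (injects_into_of_rel (fun y x => M (x, y))) Msurj _.
by move=> y y' x Myx My'x; apply: Mfun Myx My'x.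
Qed.
End Comparability.

Lemma injects_into_comp {T U V} (A : set T) (B : set U) (C : set V) f g :
  injects_into A B f -> injects_into B C g -> injects_into A C (g \o f).
Proof.
move=> [fB f_inj] [gC g_inj]; split=> [x /fB /gC //|x y Ax Ay /g_inj].
by move=> /(_ (fB _ Ax) (fB _ Ay)) /f_inj; apply.
Qed.

Section SquareCodes.
Context {B : Type}.
Implicit Types (A : set B) (S : set ((B * B) * B)) (m : B * B -> B).

Definition code_dom S : set B := fun a => exists z, S ((a, a), z).

(* [S] is the graph of an injection of [A × A] into [A], [A = code_dom S]. *)
Definition square_code S : Prop :=
  [/\ forall p z z', S (p, z) -> S (p, z') -> z = z',
      forall p p' z, S (p, z) -> S (p', z) -> p = p',
      forall a b, code_dom S a -> code_dom S b -> exists z, S ((a, b), z)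
    & forall a b z, S ((a, b), z) -> [/\ code_dom S a, code_dom S b & code_dom S z]].

Definition graph_on A m : set ((B * B) * B) := fun '(p, z) => (A `*` A) p /\ z = m p.

Lemma code_dom_graph_on {A m} : injects_into (A `*` A) A m -> code_dom (graph_on A m) = A.
Proof.
move=> [mA _]; apply/seteqP; split=> [a [z [[] //]]|a Aa].
by exists (m (a, a)).
Qed.

Lemma graph_on_square_code {A m} : injects_into (A `*` A) A m -> square_code (graph_on A m).
Proof.
move=> minj; have [mA m_inj] := minj; rewrite /square_code code_dom_graph_on //.
split=> [p z z' [_ ->] [_ ->] //|p p' z [Ap ->] [Ap' Ez]|a b Aa Ab|a b z [[Aa Ab] ->]].
- exact: m_inj.
- by exists (m (a, b)).
- by split=> //; apply: mA.
Qed.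

Lemma square_code_bigcup F : F `<=` square_code -> total_on F subset ->
  square_code (\bigcup_(S in F) S).
Proof.
move=> Fcode Ftot.
have upper S S' : F S -> F S' -> exists2 S'', F S'' & S `<=` S'' /\ S' `<=` S''.
  move=> FS FS'; have [SS'|S'S] := Ftot S S' FS FS'; first by exists S' => //; split.
  by exists S => //; split.
have dom_sub S a : F S -> code_dom S a -> code_dom (\bigcup_(S in F) S) a.
  by move=> FS [z Sz]; exists z, S.
have dom_in a : code_dom (\bigcup_(S in F) S) a -> exists2 S, F S & code_dom S a.
  by move=> [z [S FS Sz]]; exists S => //; exists z.
split.
- move=> p z z' [S FS Sz] [S' FS' Sz']; have [S'' FS'' [SS'' S'S'']] := upper S S' FS FS'.
  by have [Sfun _ _ _] := Fcode S'' FS''; apply: Sfun (SS'' _ Sz) (S'S'' _ Sz').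
- move=> p p' z [S FS Sz] [S' FS' Sz']; have [S'' FS'' [SS'' S'S'']] := upper S S' FS FS'.
  by have [_ Sinj _ _] := Fcode S'' FS''; apply: Sinj (SS'' _ Sz) (S'S'' _ Sz').
- move=> a b /dom_in [S FS [z Sz]] /dom_in [S' FS' [z' Sz']].
  have [S'' FS'' [SS'' S'S'']] := upper S S' FS FS'.
  have [_ _ Stotal _] := Fcode S'' FS''.
  have [w Sw] := Stotal a b (ex_intro _ z (SS'' _ Sz)) (ex_intro _ z' (S'S'' _ Sz')).
  by exists w, S''.
- move=> a b z [S FS Sz]; have [_ _ _ /(_ a b z Sz) [Sa Sb Sz']] := Fcode S FS.
  by split; apply: dom_sub FS _.
Qed.

Lemma square_code_graph_on {S} : square_code S ->
  exists m, injects_into (code_dom S `*` code_dom S) (code_dom S) m /\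
            S `<=` graph_on (code_dom S) m.
Proof.
move=> [Sfun Sinj Stotal Sdom].
have /choice [m mP] (p : B * B) : exists z, (code_dom S `*` code_dom S) p -> S (p, z).
  have [[Aa Ab]|NAp] := pselect ((code_dom S `*` code_dom S) p); last by exists p.1.
  by case: p Aa Ab => a b /Stotal /[apply] [[z Sz]]; exists z.
exists m; split; first split.
- by move=> [a b] /mP /Sdom [].
- by move=> p p' /mP Sp /mP Sp' Em; apply: Sinj Sp _; rewrite Em.
- move=> [[a b] z] /= Sabz; have [Aa Ab _] := Sdom _ _ _ Sabz.
  by split=> //; apply: Sfun Sabz (mP (a, b) _).
Qed.

Lemma tagged_injection {A D m k a0 a1} : injects_into (A `*` A) A m ->
  A a0 -> A a1 -> a0 <> a1 -> injects_into D A k ->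
  exists h, injects_into (A `|` D) A h.
Proof.
move=> minj Aa0 Aa1 a01 [kA k_inj].
pose tag x := if `[< A x >] then (x, a0) else (k x, a1).
suff taginj : injects_into (A `|` D) (A `*` A) tag.
  by exists (m \o tag); apply: injects_into_comp minj.
rewrite /tag; split=> [x|x y].
  by case: asboolP => [Ax _|NAx [//|Dx]]; split=> //; apply: kA.
case: asboolP => [Ax|NAx]; case: asboolP => [Ay|NAy] Hx Hy /pair_equal_spec [Exy Ea].
- exact: Exy.
- by case: (a01 Ea).
- by case: (a01 (esym Ea)).
- by apply: k_inj Exy; [case: Hx|case: Hy].
Qed.

Lemma image_inverse {A} {g : B -> B} : (forall x y, A x -> A y -> g x = g y -> x = y) ->
  exists k, injects_into (g @` A) A k.
Proof.
move=> g_inj; have /choice [k kP] (y : B) : exists x : B, (g @` A) y -> A x /\ g x = y.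
  by have [[x Ax gx]|Ny] := pselect ((g @` A) y); [exists x|exists y].
exists k; split=> [y /kP [] //|y y' /kP [_ gky] /kP [_ gky'] Ek].
by rewrite -gky -gky' Ek.
Qed.

(* The new pairs [(A ∪ gA)² \ A²] are coded in [gA]: they inject into [A] by
   tagging, hence into [gA] through [m] and [g]. *)
Lemma pairing_extend {A m g a0 a1} : injects_into (A `*` A) A m ->
  A a0 -> A a1 -> a0 <> a1 -> injects_into A (~` A) g ->
  exists m', injects_into ((A `|` g @` A) `*` (A `|` g @` A)) (A `|` g @` A) m' /\
             forall p, (A `*` A) p -> m' p = m p.
Proof.
move=> minj Aa0 Aa1 a01 ginj; have [mA m_inj] := minj; have [gA g_inj] := ginj.
have [k kinj] := image_inverse g_inj.
have [h [hA h_inj]] := tagged_injection minj Aa0 Aa1 a01 kinj.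
have hpA p : ((A `|` g @` A) `*` (A `|` g @` A)) p -> (A `*` A) (h p.1, h p.2).
  by case=> /hA ? /hA.
exists (fun p => if `[< (A `*` A) p >] then m p else g (m (h p.1, h p.2))).
split; last by move=> p App; case: asboolP.
split=> [p Cp|p p' Cp Cp'].
  case: asboolP => [/mA|_]; first by left.
  by right; exists (m (h p.1, h p.2)) => //; apply/mA/hpA.
case: asboolP => [App|NApp]; case: asboolP => [App'|NApp'].
- exact: m_inj.
- by move=> Em; exfalso; apply: (gA _ (mA _ (hpA _ Cp'))); rewrite -Em; apply: mA.
- by move=> Em; exfalso; apply: (gA _ (mA _ (hpA _ Cp))); rewrite Em; apply: mA.
- move=> /(g_inj _ _ (mA _ (hpA _ Cp)) (mA _ (hpA _ Cp'))).
  move=> /(m_inj _ _ (hpA _ Cp) (hpA _ Cp')) /pair_equal_spec [Eh1 Eh2].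
  case: p p' Cp Cp' {NApp NApp'} Eh1 Eh2 => [a b] [a' b'] [Ca Cb] [Ca' Cb'] /=.
  by move=> /h_inj -> // /h_inj -> //.
Qed.

Lemma maximal_square_code_absorbs {M : set ((B * B) * B)} {a0 a1} : square_code M ->
  (forall N, M `<=` N -> square_code N -> N `<=` M) ->
  code_dom M a0 -> code_dom M a1 -> a0 <> a1 ->
  exists g, injects_into (~` code_dom M) (code_dom M) g.
Proof.
(* Otherwise [pairing_extend] would give a strictly larger square code. *)
move=> Mcode Mmax Ma0 Ma1 a01; pose A := code_dom M.
have [m [minj Mm]] := square_code_graph_on Mcode.
have [[g ginj]|//] := injects_into_total A (~` A).
have [m' [m'inj m'm]] := pairing_extend minj Ma0 Ma1 a01 ginj.
have graph'M : graph_on (A `|` g @` A) m' `<=` M.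
  apply: Mmax (graph_on_square_code m'inj) => -[p z] /Mm [[Ap1 Ap2] ->].
  by split; [split; left|rewrite m'm].
have Aga0 : A (g a0).
  exists (m' (g a0, g a0)); apply: graph'M.
  by split=> //; split; right; exists a0.
by case: ginj => /(_ a0 Ma0).
Qed.
End SquareCodes.

Lemma range_pairing {B} {c : nat -> B} : injective c ->
  exists m, injects_into (range c `*` range c) (range c) m.
Proof.
move=> c_inj; have /choice [idx idxP] (b : B) : exists i, range c b -> c i = b.
  have [[i _ <-]|Nb] := pselect (range c b); first by exists i.
  by exists 0 => /Nb.
exists (fun p => c (to_nat (idx p.1, idx p.2))).
split=> [p _|p p']; first by exists (to_nat (idx p.1, idx p.2)).
move: p p' => [a b] [a' b'] [/idxP Ea /idxP Eb] [/idxP Ea' /idxP Eb'] /c_inj /(f_equal of_nat).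
rewrite !cancel_of_to => /pair_equal_spec [E1 E2].
by move: Ea Eb Ea' Eb'; rewrite /= E1 E2 => -> -> <- <-.
Qed.

Theorem infinite_square_embedding {B : Type} : ~ finite_type B ->
  exists p : B * B -> B, injective p.
Proof.
move=> /infinite_nat_embedding [c c_inj].
have [m0 m0inj] := range_pairing c_inj.
have [M [M0M Mcode Mmax]] := zorn_above (graph_on_square_code m0inj) square_code_bigcup.
have Mc i : code_dom M (c i).
  have : code_dom (graph_on (range c) m0) (c i) by rewrite code_dom_graph_on //; exists i.
  by case=> z /M0M Mz; exists z.
have c01 : c 0 <> c 1 by move=> /c_inj.
have [g ginj] := maximal_square_code_absorbs Mcode Mmax (Mc 0) (Mc 1) c01.
have [m [minj _]] := square_code_graph_on Mcode; have [_ m_inj] := minj.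
have [h [hA h_inj]] := tagged_injection minj (Mc 0) (Mc 1) c01 ginj.
rewrite setUCr in hA h_inj.
exists (fun q => m (h q.1, h q.2)) => -[a b] [a' b'] /=.
move=> /(m_inj (h a, h b) (h a', h b') (conj (hA a I) (hA b I)) (conj (hA a' I) (hA b' I))).
by move=> /pair_equal_spec [/h_inj Ea /h_inj Eb]; rewrite Ea // Eb.
Qed.

Lemma infinite_list_embedding {B : Type} : ~ finite_type B ->
  exists enc : list B -> B, injective enc.
Proof.
move=> Binf; have [c c_inj] := infinite_nat_embedding Binf.
have [p p_inj] := infinite_square_embedding Binf.
(* [fold] alone need not be injective ([c 0] may be a code); the length fixes it. *)
pose fix fold l := if l is x :: l' then p (x, fold l') else c 0.
exists (fun l => p (c (length l), fold l)) => l l' /p_inj /pair_equal_spec [/c_inj].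
elim: l l' => [|x l IH] [|x' l'] //= [/IH {}IH] /p_inj /pair_equal_spec [-> /IH ->] //.
Qed.

Definition trace {B} (A : set B) (l : list B) : list B := List.filter (fun x => `[< A x >]) l.

Lemma in_trace {B} (A : set B) l x : In x (trace A l) <-> In x l /\ A x.
Proof. by rewrite filter_In; split=> -[? /asboolP]. Qed.

Lemma list_witnesses {X Y} {xs : list X} {R : X -> Y -> Prop} :
  (forall x, In x xs -> exists y, R x y) ->
  exists ys, forall x, In x xs -> exists2 y, In y ys & R x y.
Proof.
elim: xs => [|x xs IH] Rxs; first by exists [].
have [y Rxy] := Rxs x (in_eq x xs).
have [ys ysP] := IH (fun x' xs'x' => Rxs x' (in_cons x x' xs xs'x')).
exists (y :: ys) => x' [<-|/ysP [y' ysy' Rx'y']]; first by exists y; first left.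
by exists y'; first right.
Qed.

Lemma separating_list {B} (b0 : B) (As : list (set B)) :
  exists l, forall A A', In A As -> In A' As -> A <> A' ->
    exists2 x, In x l & ~ (A x <-> A' x).
Proof.
have separated q : In q (list_prod As As) -> exists x, q.1 <> q.2 -> ~ (q.1 x <-> q.2 x).
  case: q => A A' _ /=; have [->|AA'] := pselect (A = A'); first by exists b0.
  have [x Nx] : exists x, ~ (A x <-> A' x).
    apply: contrapT => /forallNP allx; apply: AA'; apply/funext => x.
    exact: propext (contrapT (allx x)).
  by exists x.
have [l lP] := list_witnesses separated; exists l => A A' AsA AsA' AA'.
by have [x lx /(_ AA') NAx] := lP (A, A') (in_prod _ _ _ _ AsA AsA'); exists x.
Qed.

Definition independent {B} (Y : set B -> set B) : Prop :=
  forall (As : list (set B)) (X : set (set B)), exists b, forall A, In A As -> (Y A b <-> X A).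

(* [Y A] collects the codes of the pairs [(l, φ)] such that the trace of [A] on
   [l] belongs to [φ]. *)
Theorem infinite_independent_family {B : Type} : ~ finite_type B ->
  exists Y : set B -> set B, independent Y.
Proof.
move=> Binf; have [enc enc_inj] := infinite_list_embedding Binf.
pose code l phi := enc (enc l :: map enc phi).
have code_inj l phi l' phi' : code l phi = code l' phi' -> l = l' /\ phi = phi'.
  by move=> /enc_inj [= /enc_inj -> /(seq.inj_map enc_inj) ->].
exists (fun A b => exists l phi, b = code l phi /\ In (trace A l) phi) => As X.
have [l lP] := separating_list (enc []) As.
pose phi := map (trace^~ l) (List.filter (fun A => `[< X A >]) As).
exists (code l phi) => A AsA; split.
- move=> [_ [_ [/code_inj [<- <-] /in_map_iff [A' [trA' /filter_In [AsA' /asboolP XA']]]]]].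
  have [<- //|A'A] := pselect (A' = A).
  have [x lx []] := lP A' A AsA' AsA A'A; split=> [A'x|Ax].
  + by have /in_trace [] : In x (trace A l) by rewrite -trA'; apply/in_trace.
  + by have /in_trace [] : In x (trace A' l) by rewrite trA'; apply/in_trace.
- move=> XA; exists l, phi; split=> //; apply/in_map_iff; exists A; split=> //.
  by apply/filter_In; split=> //; apply/asboolP.
Qed.

Lemma ultrafilter_of_UltraFilter {T} (U : set (set T)) : UltraFilter U -> ultrafilter U.
Proof.
move=> UU; split.
- exact: filterT.
- exact: filter_not_empty.
- by move=> C D UC CD; apply: filterS UC.
- by move=> C D; apply: filterI.
- by move=> C; apply: in_ultra_setVsetC.
Qed.

Lemma ultrafilter_ex {T} {U : set (set T)} {C} : ultrafilter U -> U C -> exists t, C t.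
Proof.
move=> [_ Unonempty Uup _ _] UC; apply: contrapT => /forallNP NC.
by apply: Unonempty; apply: Uup UC _.
Qed.

Lemma ultrafilter_of_fip {T I} (G : I -> set T) :
  (forall ks : list I, exists t, forall i, In i ks -> G i t) ->
  exists U, ultrafilter U /\ forall i, U (G i).
Proof.
move=> Gfip.
pose F D := exists ks, forall t, (forall i, In i ks -> G i t) -> D t.
have FF : ProperFilter F.
  split; first by move=> [ks ksD]; have [t /ksD] := Gfip ks.
  split; first by exists [].
  - move=> C D [ks ksC] [js jsD]; exists (ks ++ js) => t Gt.
    by split; [apply: ksC|apply: jsD] => i ij; apply: Gt; apply: in_or_app; [left|right].
  - by move=> C D CD [ks ksC]; exists ks => t /ksC /CD.
have [U [UU FU]] := ultraFilterLemma FF.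
exists U; split; first exact: ultrafilter_of_UltraFilter.
by move=> i; apply: FU; exists [i] => t; apply; left.
Qed.

Lemma ultrafilter_const {T} (U : set (set T)) (P : Prop) :
  ultrafilter U -> U (fun _ => P) <-> P.
Proof.
move=> [Ufull Unonempty Uup _ _]; split=> [UP|p]; last by apply: Uup Ufull _.
by apply: contrapT => NP; apply: Unonempty; apply: Uup UP _.
Qed.

Lemma cyl_ultrafilter_const {B X} (L : set (set (X -> B))) (P : Prop) :
  cyl_ultrafilter L -> L (fun _ => P) <-> P.
Proof.
move=> [_ Lfull Lnonempty Lup _ _]; split=> [LP|p].
  apply: contrapT => NP; apply: Lnonempty; apply: Lup LP _ _ => //.
  by exists [], (fun _ => False).
by apply: Lup Lfull _ _; first by exists [], (fun _ => P).
Qed.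

Lemma exact_realizes_ultrafilters {B E} {L : set (set (E -> B))} {U : set (set B)} :
  local_representation L -> exact L -> ultrafilter U ->
  exists e, forall S, L (fun psi => S (psi e)) <-> U S.
Proof.
move=> LL [_ Lexact] UU.
pose eta0 (i : Empty_set) : E := match i with end.
pose U' (C : set (option Empty_set -> B)) := U (fun b => C (fun _ => b)).
have U'U : ultrafilter U'.
  rewrite /U'; case: UU => Ufull Unonempty Uup Uinter Uultra.
  split=> [//|//|C D UC CD|C D|C]; [|exact: Uinter|exact: Uultra].
  by apply: (Uup _ _ UC) => b /CD.
(* Over the empty index set every set of functions is constant. *)
have U'L : same_filter (projection U') (pullback L eta0).
  move=> C; rewrite /projection /pullback /U'.
  have Cconst f : C f = C (fun i => match i with end) by congr C; apply/funext => -[].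
  set P := C (fun i => match i with end).
  rewrite (_ : (fun b => C _) = fun _ => P); last by apply/funext => b; apply: Cconst.
  rewrite (_ : (fun psi => C _) = fun _ => P); last by apply/funext => psi; apply: Cconst.
  by rewrite ultrafilter_const // cyl_ultrafilter_const.
have fin0 : finite_type Empty_set by exists [] => -[].
have [e eU'] := Lexact _ fin0 eta0 U' U'U U'L.
have cylS S : cylinder (fun phi : option Empty_set -> B => S (phi None)).
  by exists [None], (fun l => if l is b :: _ then S b else False).
exists e => S; have [to_U from_U] := eU' (fun phi => S (phi None)).
by split=> [LS|/from_U []]; first exact: to_U (conj (cylS S) LS).
Qed.

Theorem mainTheorem10 (B E : Type) (L : ((E -> B) -> Prop) -> Prop) :
  local_representation L ->
  exact L ->
  ~ finite_type B ->
  exists f : ((B -> Prop) -> Prop) -> E,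
    forall X Y, f X = f Y -> X = Y.
Proof.
move=> LL Lexact Binf; have [Y Yindep] := infinite_independent_family Binf.
pose sign_set X A b := Y A b <-> X A.
have realized X : exists e, exists2 U, ultrafilter U &
    (forall A, U (sign_set X A)) /\ forall S, L (fun psi => S (psi e)) <-> U S.
  have [U [UU UX]] := ultrafilter_of_fip (sign_set X) (fun As => Yindep As X).
  have [e eU] := exact_realizes_ultrafilters LL Lexact UU.
  by exists e, U.
have [f fP] := choice realized; exists f => X1 X2 Ef.
have [U1 _ [UX1 e1U1]] := fP X1; have [U2 U2U [UX2 e2U2]] := fP X2.
have U2X1 A : U2 (sign_set X1 A) by apply/e2U2; rewrite -Ef; apply/e1U1.
apply/funext => A; apply/propext.
have [b [Y1 Y2]] := ultrafilter_ex U2U (uf_inter _ U2U _ _ (U2X1 A) (UX2 A)).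
by split=> ?; [apply/Y2/Y1|apply/Y1/Y2].
Qed.
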